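(* Let $\gamma\in V$ be an element of infinite order. Then there is a non-empty open $\gamma$-wandering subset of $S^1$.
   Context: $S^1$ is the interval $[0,1]$ with $0$ and $1$ identified. Thompson's group $V$ is the group of left-continuous bijections of $S^1$ which map finite dyadic fractions to finite dyadic fractions, are differentiable except at finitely many finite dyadic fractions, and on each maximal interval of differentiability are linear with slope an integer power of $2$. For $\gamma\in V$, a subset $U\subseteq S^1$ is $\gamma$-wandering if for every $n\in\mathbb{Z}$ with $\gamma^n\neq e$ we have $\gamma^n(U)\cap U=\emptyset$. *)

From Stdlib Require Import Reals ZArith Lra.
Open Scope R_scope.

(* S^1 = [0,1] with 0 ~ 1, represented by the fundamental domain (0,1]
   (the point 1 stands for 0 = 1); left-continuity is natural on (0,1]. *)
Definition S1 (x : R) : Prop := 0 < x <= 1.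

Definition dyadic (x : R) : Prop :=
  exists (k : Z) (n : nat), x = IZR k / 2 ^ n.

Definition cdist (x y : R) : R := Rmin (Rabs (x - y)) (1 - Rabs (x - y)).

Definition S1_open (U : R -> Prop) : Prop :=
  (forall x, U x -> S1 x) /\
  (forall x, U x -> exists eps, 0 < eps /\
      forall y, S1 y -> cdist x y < eps -> U y).

(* Thompson's group V: left-continuous bijections of S^1 mapping dyadics to
   dyadics, and affine with slope 2^k on finitely many pieces
   (a_i, a_{i+1}] cut at dyadic points 0 = a_0 < ... < a_n = 1.
   (Affine on half-open pieces (a_i,a_{i+1}] is exactly: differentiable off
   finitely many dyadic points, linear with slope a power of 2 on each
   maximal interval of differentiability, and left-continuous.) *)
Definition in_V (g : R -> R) : Prop :=
  (forall x, S1 x -> S1 (g x)) /\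
  (forall x y, S1 x -> S1 y -> g x = g y -> x = y) /\
  (forall y, S1 y -> exists x, S1 x /\ g x = y) /\
  (forall x, S1 x -> dyadic x -> dyadic (g x)) /\
  exists (n : nat) (a : nat -> R) (k : nat -> Z) (b : nat -> R),
    a 0%nat = 0 /\ a n = 1 /\
    (forall i, (i <= n)%nat -> dyadic (a i)) /\
    (forall i, (i < n)%nat -> a i < a (S i)) /\
    (forall i x, (i < n)%nat -> a i < x <= a (S i) ->
        g x = powerRZ 2 (k i) * x + b i).

(* gamma^n <> e in V, for n : Z (gamma^(-m) = e iff gamma^m = e) *)
Definition zpow_ne_id (g : R -> R) (n : Z) : Prop :=
  match n with
  | Z0 => False
  | Zpos p | Zneg p => exists x, S1 x /\ Nat.iter (Pos.to_nat p) g x <> x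
  end.

Definition zimage (g : R -> R) (n : Z) (U : R -> Prop) : R -> Prop :=
  match n with
  | Z0 => U
  | Zpos p => fun y => exists x, S1 x /\ U x /\ Nat.iter (Pos.to_nat p) g x = y
  | Zneg p => fun y => S1 y /\ U (Nat.iter (Pos.to_nat p) g y)
  end.

Definition wandering (g : R -> R) (U : R -> Prop) : Prop :=
  forall n : Z, zpow_ne_id g n -> forall x, ~ (zimage g n U x /\ U x).

Definition infinite_order (g : R -> R) : Prop :=
  forall m : nat, (0 < m)%nat -> exists x, S1 x /\ Nat.iter m g x <> x.

From Stdlib Require Import Reals ZArith Lra Lia Classical FinFun IndefiniteDescription.
Open Scope R_scope.

(* On every standard dyadic interval of large enough level L, an element g of V is the
   canonical affine map onto another standard dyadic interval.  Along a chain of such affine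
   images two members either never meet, and then the first one wanders, or they meet and are
   nested: equal members make the chain periodic, a contraction leaves one half of an interval
   that is never revisited, and an expansion would push the level below zero.
   If nothing wanders, every level-L interval on which no power of g is the identity must drop
   below level L along its orbit, landing in an interval that contains another such level-L
   interval; by finiteness these form a cycle.  Running the cycle backwards with g^-1 stays at
   high level forever, so the dichotomy applies to g^-1 and makes some power of g the identity
   on an interval of the cycle.  Hence a power of g is the identity on every level-L interval,
   i.e. on the whole circle, and g has finite order. *)

Definition pow2 (l : Z) : R := powerRZ 2 l.

Lemma pow2_pos l : 0 < pow2 l.
Proof. apply powerRZ_lt; lra. Qed.

Lemma pow2_add a b : pow2 (a + b) = pow2 a * pow2 b.
Proof. apply powerRZ_add; lra. Qed.

Lemma pow2_IZR d : (0 <= d)%Z -> pow2 d = IZR (2 ^ d).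
Proof.
  intros Hd. unfold pow2. rewrite <- (Z2Nat.id d Hd), <- pow_powerRZ, pow_IZR.
  reflexivity.
Qed.

Lemma IZR_lt_succ a b : IZR a < IZR b + 1 -> (a <= b)%Z.
Proof. rewrite <- plus_IZR. intros H. apply lt_IZR in H. lia. Qed.

(* The code [(l, j)] stands for the standard dyadic interval (j/2^l, (j+1)/2^l]. *)
Definition dint := (Z * Z)%type.
Definition dlev (c : dint) : Z := fst c.
Definition didx (c : dint) : Z := snd c.

Definition in_dint (c : dint) (x : R) : Prop :=
  IZR (didx c) < x * pow2 (dlev c) <= IZR (didx c) + 1.

Definition dint_incl (c c' : dint) : Prop := forall x, in_dint c x -> in_dint c' x.

Definition dint_top (c : dint) : R := (IZR (didx c) + 1) / pow2 (dlev c).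

Definition dint_left (c : dint) : dint := (dlev c + 1, 2 * didx c)%Z.
Definition dint_right (c : dint) : dint := (dlev c + 1, 2 * didx c + 1)%Z.

Lemma in_dint_top c : in_dint c (dint_top c).
Proof.
  unfold in_dint, dint_top. pose proof (pow2_pos (dlev c)).
  replace ((IZR (didx c) + 1) / pow2 (dlev c) * pow2 (dlev c))
    with (IZR (didx c) + 1) by (field; lra). lra.
Qed.

Lemma dint_incl_trans a b c : dint_incl a b -> dint_incl b c -> dint_incl a c.
Proof. intros Hab Hbc x Hx. auto. Qed.

Lemma dint_eq_of_level c1 c2 x :
  in_dint c1 x -> in_dint c2 x -> dlev c1 = dlev c2 -> c1 = c2.
Proof.
  destruct c1 as [l1 j1], c2 as [l2 j2]; unfold in_dint, dlev, didx; simpl.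
  intros H1 H2 ->.
  assert (A1 : IZR j1 < IZR j2 + 1) by lra.
  assert (A2 : IZR j2 < IZR j1 + 1) by lra.
  apply IZR_lt_succ in A1, A2. f_equal; lia.
Qed.

Lemma dint_nest c1 c2 x :
  in_dint c1 x -> in_dint c2 x -> (dlev c1 <= dlev c2)%Z -> dint_incl c2 c1.
Proof.
  destruct c1 as [l1 j1], c2 as [l2 j2]; unfold dint_incl, in_dint, dlev, didx; simpl.
  intros H1 H2 Hl y Hy.
  replace l2 with (l1 + (l2 - l1))%Z in H2, Hy by lia.
  rewrite pow2_add, (pow2_IZR (l2 - l1)) in H2, Hy by lia.
  assert (HD : (0 < 2 ^ (l2 - l1))%Z) by (apply Z.pow_pos_nonneg; lia).
  set (D := (2 ^ (l2 - l1))%Z) in *.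
  pose proof (pow2_pos l1).
  assert (HDr : 0 < IZR D) by (apply IZR_lt; lia).
  assert (A1 : IZR (j1 * D) < IZR j2 + 1) by (rewrite mult_IZR; nra).
  assert (A2 : IZR j2 < IZR ((j1 + 1) * D)) by (rewrite mult_IZR, plus_IZR; nra).
  apply IZR_lt_succ in A1. apply lt_IZR in A2.
  assert (B1 : IZR (j1 * D) <= IZR j2) by (apply IZR_le; lia).
  assert (B2 : IZR (j2 + 1) <= IZR ((j1 + 1) * D)) by (apply IZR_le; lia).
  rewrite mult_IZR in B1. rewrite plus_IZR, mult_IZR, plus_IZR in B2.
  split; nra.
Qed.

Lemma dint_incl_or c1 c2 x :
  in_dint c1 x -> in_dint c2 x -> dint_incl c1 c2 \/ dint_incl c2 c1.
Proof.
  intros H1 H2. destruct (Z.le_ge_cases (dlev c1) (dlev c2)).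
  - right. eapply dint_nest; eauto.
  - left. eapply dint_nest; eauto.
Qed.

Lemma in_dint_halves c y :
  in_dint c y <-> in_dint (dint_left c) y \/ in_dint (dint_right c) y.
Proof.
  destruct c as [l j]; unfold in_dint, dint_left, dint_right, dlev, didx; cbn [fst snd].
  rewrite pow2_add. replace (pow2 1) with 2 by (unfold pow2; simpl; ring).
  rewrite !plus_IZR, !mult_IZR. split.
  - intros H. destruct (Rle_dec (y * (pow2 l * 2)) (2 * IZR j + 1)); [left|right]; lra.
  - intros [H|H]; lra.
Qed.

Lemma dint_halves_disjoint c y :
  in_dint (dint_left c) y -> in_dint (dint_right c) y -> False.
Proof.
  intros H0 H1. pose proof (dint_eq_of_level _ _ _ H0 H1 eq_refl) as E.
  unfold dint_left, dint_right in E. injection E. lia.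
Qed.

Lemma dint_incl_half c c' x :
  in_dint c x -> in_dint c' x -> (dlev c' < dlev c)%Z ->
  dint_incl c (dint_left c') \/ dint_incl c (dint_right c').
Proof.
  intros Hc Hc' Hl.
  destruct (proj1 (in_dint_halves c' x) Hc') as [H|H]; [left|right];
    eapply dint_nest; eauto; unfold dint_left, dint_right, dlev in *; simpl; lia.
Qed.

Lemma dint_incl_level c c' : dint_incl c c' -> (dlev c' <= dlev c)%Z.
Proof.
  intros Hcc'. destruct (Z_le_gt_dec (dlev c') (dlev c)) as [Hl|Hl]; [exact Hl|exfalso].
  pose proof (in_dint_top c) as Hx.
  pose proof (in_dint_top (dint_left c)) as Hl0. pose proof (in_dint_top (dint_right c)) as Hr0.
  destruct (dint_incl_half c' c _ (Hcc' _ Hx) Hx ltac:(lia)) as [Hh|Hh].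
  - apply (dint_halves_disjoint c (dint_top (dint_right c))); auto.
    apply Hh, Hcc', in_dint_halves; auto.
  - apply (dint_halves_disjoint c (dint_top (dint_left c))); auto.
    apply Hh, Hcc', in_dint_halves; auto.
Qed.

Lemma dint_incl_cases c c' :
  dint_incl c c' ->
  c = c' \/ dint_incl c (dint_left c') \/ dint_incl c (dint_right c').
Proof.
  intros Hcc'. pose proof (in_dint_top c) as Hx.
  destruct (Z_le_lt_eq_dec _ _ (dint_incl_level c c' Hcc')) as [Hl|Hl].
  - right. eapply dint_incl_half; eauto.
  - left. symmetry. eapply dint_eq_of_level; eauto.
Qed.

Definition maps_affinely (f : R -> R) (c c' : dint) : Prop :=
  forall x, in_dint c x ->
    f x * pow2 (dlev c') = x * pow2 (dlev c) + IZR (didx c' - didx c).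

Lemma maps_affinely_into f c c' x : maps_affinely f c c' -> in_dint c x -> in_dint c' (f x).
Proof. intros H Hx. pose proof (H x Hx) as E. unfold in_dint in *. rewrite E, minus_IZR. lra. Qed.

Lemma maps_affinely_onto f c c' y :
  maps_affinely f c c' -> in_dint c' y -> exists x, in_dint c x /\ f x = y.
Proof.
  intros H Hy. pose proof (pow2_pos (dlev c)). pose proof (pow2_pos (dlev c')).
  set (x := (y * pow2 (dlev c') - IZR (didx c' - didx c)) / pow2 (dlev c)).
  assert (Ex : x * pow2 (dlev c) = y * pow2 (dlev c') - IZR (didx c' - didx c))
    by (unfold x; field; lra).
  assert (Hx : in_dint c x) by (unfold in_dint in *; rewrite Ex, minus_IZR; lra).
  exists x; split; [exact Hx|].
  pose proof (H x Hx) as E. rewrite Ex in E.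
  apply Rmult_eq_reg_r with (pow2 (dlev c')); lra.
Qed.

Lemma maps_affinely_comp f h c1 c2 c3 :
  maps_affinely f c1 c2 -> maps_affinely h c2 c3 -> maps_affinely (fun x => h (f x)) c1 c3.
Proof.
  intros H1 H2 x Hx. rewrite (H2 (f x) (maps_affinely_into _ _ _ _ H1 Hx)), (H1 x Hx).
  rewrite !minus_IZR. ring.
Qed.

Lemma maps_affinely_fix f c x : maps_affinely f c c -> in_dint c x -> f x = x.
Proof.
  intros H Hx. pose proof (H x Hx) as E. rewrite Z.sub_diag in E.
  pose proof (pow2_pos (dlev c)). apply Rmult_eq_reg_r with (pow2 (dlev c)); lra.
Qed.

Lemma maps_affinely_inv f h c c' :
  maps_affinely f c c' -> (forall x, in_dint c x -> h (f x) = x) -> maps_affinely h c' c.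
Proof.
  intros H Hh y Hy. destruct (maps_affinely_onto _ _ _ _ H Hy) as [x [Hx <-]].
  rewrite (Hh x Hx), (H x Hx), !minus_IZR. ring.
Qed.

Lemma maps_affinely_restrict f c1 c1' c :
  maps_affinely f c1 c1' -> dint_incl c c1 ->
  exists c', maps_affinely f c c' /\ dint_incl c' c1'.
Proof.
  intros H Hs. pose proof (dint_incl_level _ _ Hs) as Hl.
  set (d := (dlev c - dlev c1)%Z).
  set (c' := (dlev c1' + d, didx c + (didx c1' - didx c1) * 2 ^ d)%Z).
  assert (HA : maps_affinely f c c').
  { intros x Hx.
    change (f x * pow2 (dlev c1' + d)
            = x * pow2 (dlev c) + IZR (didx c + (didx c1' - didx c1) * 2 ^ d - didx c)).
    rewrite pow2_add, <- Rmult_assoc, (H x (Hs x Hx)).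
    replace (dlev c) with (dlev c1 + d)%Z by (unfold d; lia).
    rewrite pow2_add, (pow2_IZR d) by (unfold d; lia).
    replace (didx c + (didx c1' - didx c1) * 2 ^ d - didx c)%Z
      with ((didx c1' - didx c1) * 2 ^ d)%Z by ring.
    rewrite mult_IZR. ring. }
  exists c'. split; [exact HA|].
  intros y Hy. destruct (maps_affinely_onto _ _ _ _ HA Hy) as [x [Hx <-]].
  apply (maps_affinely_into _ _ _ _ H), Hs, Hx.
Qed.

Lemma maps_affinely_iter f (I : nat -> dint) n t :
  (forall s, (n <= s < n + t)%nat -> maps_affinely f (I s) (I (S s))) ->
  maps_affinely (Nat.iter t f) (I n) (I (n + t)%nat).
Proof.
  induction t as [|t IH]; intros H.
  - rewrite Nat.add_0_r. intros x _. simpl. rewrite Z.sub_diag. simpl. ring.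
  - replace (n + S t)%nat with (S (n + t)) by lia.
    apply (maps_affinely_comp (Nat.iter t f) f _ (I (n + t)%nat)).
    + apply IH. intros s Hs. apply H. lia.
    + apply H. lia.
Qed.

Definition on_circle (c : dint) : Prop := forall x, in_dint c x -> S1 x.

Definition circle : dint := (0, 0)%Z.

Lemma in_dint_circle x : in_dint circle x <-> S1 x.
Proof. unfold in_dint, circle, S1, dlev, didx, pow2; simpl. split; lra. Qed.

Lemma on_circle_bounds c : on_circle c -> (0 <= dlev c)%Z /\ (0 <= didx c < 2 ^ dlev c)%Z.
Proof.
  intros H. pose proof (H _ (in_dint_top c)) as Ht. unfold S1, dint_top in Ht.
  pose proof (pow2_pos (dlev c)) as Hp.
  assert (Hl : (0 <= dlev c)%Z).
  { destruct (Z_le_gt_dec 0 (dlev c)) as [Hl|Hl]; [exact Hl|exfalso].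
    assert (Hinv : pow2 (dlev c) * pow2 (- dlev c) = 1).
    { rewrite <- pow2_add. replace (dlev c + - dlev c)%Z with 0%Z by lia. reflexivity. }
    assert (H2 : 2 <= pow2 (- dlev c)).
    { rewrite pow2_IZR by lia. apply IZR_le.
      change 2%Z with (2 ^ 1)%Z at 1. apply Z.pow_le_mono_r; lia. }
    assert (Hx : in_dint c (dint_top c - 1)).
    { unfold in_dint, dint_top. rewrite Rmult_minus_distr_r.
      replace ((IZR (didx c) + 1) / pow2 (dlev c) * pow2 (dlev c))
        with (IZR (didx c) + 1) by (field; lra). nra. }
    apply H in Hx. unfold S1, dint_top in Hx. lra. }
  split; [exact Hl|]. rewrite pow2_IZR in Hp, Ht by exact Hl.
  assert (Hj : 0 < IZR (didx c) + 1 <= IZR (2 ^ dlev c)).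
  { split.
    - apply (Rmult_lt_reg_r (/ IZR (2 ^ dlev c))); [apply Rinv_0_lt_compat; lra|]. lra.
    - apply (Rmult_le_reg_r (/ IZR (2 ^ dlev c))); [apply Rinv_0_lt_compat; lra|].
      rewrite Rinv_r by lra. lra. }
  rewrite <- plus_IZR in Hj. destruct Hj as [Hj1 Hj2].
  apply lt_IZR in Hj1. apply le_IZR in Hj2. lia.
Qed.

Lemma dint_level_cover L y :
  (0 <= L)%Z -> S1 y -> exists j, (0 <= j < 2 ^ L)%Z /\ in_dint (L, j) y.
Proof.
  intros HL Hy. set (z := y * pow2 L). destruct (archimed (- z)) as [A1 A2].
  assert (Hs : in_dint (L, (- up (- z))%Z) y).
  { unfold in_dint, dlev, didx; cbn [fst snd]. fold z. rewrite opp_IZR. lra. }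
  exists (- up (- z))%Z. split; [|exact Hs].
  unfold in_dint, dlev, didx in Hs; cbn [fst snd] in Hs. fold z in Hs.
  pose proof (pow2_pos L).
  assert (Hz0 : 0 < z) by (unfold z, S1 in *; nra).
  assert (Hz1 : z <= IZR (2 ^ L)) by (unfold z, S1 in *; rewrite <- pow2_IZR by lia; nra).
  split.
  - apply IZR_lt_succ. simpl. lra.
  - apply lt_IZR. lra.
Qed.

Lemma least_nat (P : nat -> Prop) :
  (exists n, P n) -> exists n, P n /\ forall m, (m < n)%nat -> ~ P m.
Proof.
  intros H.
  destruct (Wf_nat.dec_inh_nat_subset_has_unique_least_element P (fun n => classic (P n)) H)
    as [n [[Pn Hmin] _]].
  exists n. split; [exact Pn|]. intros m Hm Pm. specialize (Hmin m Pm). lia.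
Qed.

Definition returns (f : R -> R) (c : dint) : Prop :=
  exists i x, (1 <= i)%nat /\ in_dint c x /\ in_dint c (Nat.iter i f x).

Definition periodic_on (f : R -> R) (c : dint) : Prop :=
  exists P, (1 <= P)%nat /\ forall x, in_dint c x -> Nat.iter P f x = x.

Section Chain.

Variable f : R -> R.
Variable I : nat -> dint.
Hypothesis I_step : forall t, maps_affinely f (I t) (I (S t)).
Hypothesis I_circle : forall t, on_circle (I t).

Lemma chain_iter n i : maps_affinely (Nat.iter i f) (I n) (I (n + i)%nat).
Proof. apply maps_affinely_iter. intros s _. apply I_step. Qed.

Lemma chain_shift a b t :
  dint_incl (I a) (I b) -> dint_incl (I (a + t)%nat) (I (b + t)%nat).
Proof.
  intros H y Hy. destruct (maps_affinely_onto _ _ _ _ (chain_iter a t) Hy) as [x [Hx <-]].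
  apply (maps_affinely_into _ _ _ _ (chain_iter b t)), H, Hx.
Qed.

Lemma chain_periodic_of_eq n d : (1 <= d)%nat -> I n = I (n + d)%nat -> periodic_on f (I n).
Proof.
  intros Hd E. exists d. split; [exact Hd|]. intros x Hx.
  pose proof (chain_iter n d) as Hnd. rewrite <- E in Hnd.
  exact (maps_affinely_fix _ _ _ Hnd Hx).
Qed.

(* Each time [I n] is strictly inside [I (n + p)] the level drops, but levels stay nonnegative. *)
Lemma chain_expanding n p :
  (1 <= p)%nat -> dint_incl (I n) (I (n + p)%nat) -> exists m, periodic_on f (I m).
Proof.
  intros Hp Hincl. apply NNPP. intros Hnone.
  assert (Hdrop : forall q, (dlev (I (n + q * p)%nat) + Z.of_nat q <= dlev (I n))%Z).
  { induction q as [|q IH]; [rewrite Nat.add_0_r; lia|].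
    assert (Hq : dint_incl (I (n + q * p)%nat) (I (n + q * p + p)%nat)).
    { replace (n + q * p + p)%nat with (n + p + q * p)%nat by lia.
      exact (chain_shift _ _ _ Hincl). }
    assert (Hne : I (n + q * p)%nat <> I (n + q * p + p)%nat).
    { intros E. apply Hnone. exists (n + q * p)%nat. exact (chain_periodic_of_eq _ _ Hp E). }
    pose proof (dint_incl_level _ _ Hq) as Hl.
    assert (Hlt : dlev (I (n + q * p + p)%nat) <> dlev (I (n + q * p)%nat)).
    { intros E. apply Hne. symmetry.
      exact (dint_eq_of_level _ _ _ (Hq _ (in_dint_top _)) (in_dint_top _) E). }
    replace (n + S q * p)%nat with (n + q * p + p)%nat by lia. lia. }
  specialize (Hdrop (S (Z.to_nat (dlev (I n))))).
  pose proof (proj1 (on_circle_bounds _ (I_circle n))).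
  pose proof (proj1 (on_circle_bounds _ (I_circle (n + S (Z.to_nat (dlev (I n))) * p)%nat))).
  lia.
Qed.

(* When [I (n + p)] lies in one half of [I n], the other half is never revisited: by
   minimality of [p] an orbit entering [I n] again can only do so at multiples of [p],
   and then it lies in [I (n + p)]. *)
Lemma chain_contracting n p :
  (1 <= p)%nat ->
  (forall r m y, (1 <= r < p)%nat -> in_dint (I m) y -> in_dint (I (m + r)%nat) y -> False) ->
  dint_incl (I (n + p)%nat) (I n) -> I (n + p)%nat <> I n ->
  exists c, on_circle c /\ ~ returns f c.
Proof.
  intros Hp Hmin Hincl Hne.
  assert (Hmono : forall q r, dint_incl (I (n + q * p + r)%nat) (I (n + r)%nat)).
  { induction q as [|q IH]; intros r.
    - rewrite Nat.add_0_r. intros z Hz; exact Hz.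
    - apply (dint_incl_trans _ (I (n + q * p + r)%nat)); [|apply IH].
      replace (n + S q * p + r)%nat with (n + p + (q * p + r))%nat by lia.
      replace (n + q * p + r)%nat with (n + (q * p + r))%nat by lia.
      exact (chain_shift _ _ _ Hincl). }
  assert (Hother : forall H', dint_incl H' (I n) ->
            (forall z, in_dint H' z -> in_dint (I (n + p)%nat) z -> False) ->
            on_circle H' /\ ~ returns f H').
  { intros H' HH' Hdisj. split; [intros z Hz; apply (I_circle n), HH', Hz|].
    intros [i [z [Hi [Hz Hiz]]]].
    pose proof (maps_affinely_into _ _ _ _ (chain_iter n i) (HH' z Hz)) as Hin.
    pose proof (Nat.div_mod i p ltac:(lia)) as Hdm.
    pose proof (Nat.mod_upper_bound i p ltac:(lia)) as Hmb.
    set (q := (i / p)%nat) in *. set (r := (i mod p)%nat) in *.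
    destruct (Nat.eq_dec r 0) as [Hr|Hr].
    - apply (Hdisj (Nat.iter i f z) Hiz), (Hmono (q - 1)%nat p).
      replace (n + (q - 1) * p + p)%nat with (n + i)%nat by (destruct q; nia). exact Hin.
    - apply (Hmin r n (Nat.iter i f z)); [lia | apply HH', Hiz|].
      apply (Hmono q r). replace (n + q * p + r)%nat with (n + i)%nat by lia. exact Hin. }
  destruct (dint_incl_cases _ _ Hincl) as [E|[Hh|Hh]]; [contradiction|..].
  - destruct (Hother (dint_right (I n))) as [Hc Hw].
    + intros z Hz. apply in_dint_halves. now right.
    + intros z Hz Hz'. exact (dint_halves_disjoint _ _ (Hh _ Hz') Hz).
    + exists (dint_right (I n)). auto.
  - destruct (Hother (dint_left (I n))) as [Hc Hw].
    + intros z Hz. apply in_dint_halves. now left.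
    + intros z Hz Hz'. exact (dint_halves_disjoint _ _ Hz (Hh _ Hz')).
    + exists (dint_left (I n)). auto.
Qed.

Lemma chain_dichotomy :
  (exists c, on_circle c /\ ~ returns f c) \/ exists m, periodic_on f (I m).
Proof.
  destruct (classic (exists d, (1 <= d)%nat /\
                      exists m y, in_dint (I m) y /\ in_dint (I (m + d)%nat) y))
    as [Hmeet|Hnomeet].
  - destruct (least_nat _ Hmeet) as [p [[Hp [n [y [Hy Hy']]]] Hmin]].
    destruct (dint_incl_or _ _ _ Hy Hy') as [Hexp|Hcon].
    + right. exact (chain_expanding _ _ Hp Hexp).
    + destruct (classic (I (n + p)%nat = I n)) as [E|Hne].
      * right. apply (chain_expanding n p Hp). rewrite E. intros z Hz; exact Hz.
      * left. apply (chain_contracting n p Hp); [|exact Hcon|exact Hne].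
        intros r m z Hr Hz Hz'. apply (Hmin r); [lia|]. split; [lia|]. exists m, z. auto.
  - left. exists (I 0%nat). split; [apply I_circle|].
    intros [i [y [Hi [Hy Hiy]]]]. apply Hnomeet. exists i. split; [exact Hi|].
    exists 0%nat, (Nat.iter i f y). split; [exact Hiy|].
    exact (maps_affinely_into _ _ _ _ (chain_iter 0 i) Hy).
Qed.

End Chain.

Definition dyadic_at (m : Z) (x : R) : Prop := exists z, x * pow2 m = IZR z.

Lemma dyadic_at_mono m m' x : dyadic_at m x -> (m <= m')%Z -> dyadic_at m' x.
Proof.
  intros [z Hz] H. exists (z * 2 ^ (m' - m))%Z.
  replace m' with (m + (m' - m))%Z at 1 by lia.
  rewrite pow2_add, (pow2_IZR (m' - m)), mult_IZR, <- Hz by lia. ring.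
Qed.

Lemma dyadic_at_of_dyadic x : dyadic x -> exists m, dyadic_at m x.
Proof.
  intros [k [n E]]. exists (Z.of_nat n), k. unfold pow2. rewrite <- pow_powerRZ, E.
  field. apply pow_nonzero; lra.
Qed.

Lemma dyadic_at_sub m u v : dyadic_at m u -> dyadic_at m v -> dyadic_at m (u - v).
Proof. intros [a Ha] [b Hb]. exists (a - b)%Z. rewrite minus_IZR, <- Ha, <- Hb. ring. Qed.

Lemma dyadic_at_scale m s x : dyadic_at m x -> dyadic_at (m - s) (pow2 s * x).
Proof.
  intros [z Hz]. exists z. rewrite <- Hz.
  replace m with (s + (m - s))%Z at 2 by lia. rewrite pow2_add. ring.
Qed.

Lemma common_level (P : nat -> Z -> Prop) N :
  (forall i l l', P i l -> (l <= l')%Z -> P i l') ->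
  (forall i, (i < N)%nat -> exists l, P i l) ->
  exists L, (0 <= L)%Z /\ forall i, (i < N)%nat -> P i L.
Proof.
  intros Hmono. induction N as [|N IH]; intros H.
  - exists 0%Z. split; [lia|]. intros; lia.
  - destruct IH as [L [HL0 HL]]; [intros i Hi; apply H; lia|].
    destruct (H N ltac:(lia)) as [l Hl].
    exists (Z.max L l). split; [lia|]. intros i Hi.
    destruct (Nat.eq_dec i N) as [->|Hne].
    + apply (Hmono _ _ _ Hl). lia.
    + apply (Hmono _ _ _ (HL i ltac:(lia))). lia.
Qed.

Lemma dint_within c u v x :
  dyadic_at (dlev c) u -> u < dint_top c <= v -> in_dint c x -> u < x <= v.
Proof.
  intros [A HA] [Hu Hv] Hx. pose proof (pow2_pos (dlev c)).
  assert (Htop : dint_top c * pow2 (dlev c) = IZR (didx c) + 1)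
    by (unfold dint_top; field; lra).
  assert (HAj : (A <= didx c)%Z).
  { apply IZR_lt_succ. rewrite <- HA, <- Htop. apply Rmult_lt_compat_r; assumption. }
  apply IZR_le in HAj. unfold in_dint in Hx. split.
  - apply (Rmult_lt_reg_r (pow2 (dlev c))); [assumption|]. lra.
  - apply (Rle_trans _ (dint_top c)); [|exact Hv].
    apply (Rmult_le_reg_r (pow2 (dlev c))); [assumption|]. lra.
Qed.

Lemma maps_affinely_of_affine g c s b :
  dyadic_at (dlev c - s) b -> (forall x, in_dint c x -> g x = pow2 s * x + b) ->
  exists c', maps_affinely g c c'.
Proof.
  intros [B HB] Hg. exists (dlev c - s, didx c + B)%Z. intros x Hx.
  change (g x * pow2 (dlev c - s) = x * pow2 (dlev c) + IZR (didx c + B - didx c)).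
  rewrite (Hg x Hx). replace (didx c + B - didx c)%Z with B by ring. rewrite <- HB.
  replace (dlev c) with (s + (dlev c - s))%Z at 2 by lia. rewrite pow2_add. ring.
Qed.

Lemma partition_piece (a : nat -> R) n x :
  a 0%nat = 0 -> a n = 1 -> S1 x -> exists i, (i < n)%nat /\ a i < x <= a (S i).
Proof.
  intros Ha0 Han Hx.
  assert (G : forall m, x <= a m -> exists i, (i < m)%nat /\ a i < x <= a (S i)).
  { induction m as [|m IH]; intros Hxm; [rewrite Ha0 in Hxm; unfold S1 in Hx; lra|].
    destruct (Rle_dec x (a m)) as [h|h].
    - destruct (IH h) as [i [Hi Hi2]]. exists i. split; [lia|exact Hi2].
    - exists m. split; [lia|lra]. }
  apply G. rewrite Han. apply Hx.
Qed.

Lemma in_V_maps_affinely g :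
  in_V g -> exists L, (0 <= L)%Z /\
    forall c, (L <= dlev c)%Z -> on_circle c ->
      exists c', maps_affinely g c c' /\ on_circle c'.
Proof.
  intros [HgS1 [_ [_ [Hdy [n [a [k [b [Ha0 [Han [Hady [Hinc Haff]]]]]]]]]]]].
  assert (Hmon : forall i m, (i <= m <= n)%nat -> a i <= a m).
  { intros i m. induction m as [|m IH]; intros Hm.
    - replace i with 0%nat by lia. lra.
    - destruct (Nat.eq_dec i (S m)) as [->|Hne]; [lra|].
      pose proof (Hinc m ltac:(lia)). pose proof (IH ltac:(lia)). lra. }
  assert (Hb : forall i, (i < n)%nat -> b i = g (a (S i)) - pow2 (k i) * a (S i)).
  { intros i Hi. rewrite (Haff i (a (S i)) Hi) by (pose proof (Hinc i Hi); lra).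
    unfold pow2. ring. }
  destruct (common_level
              (fun i l => dyadic_at l (a i) /\ ((i < n)%nat -> dyadic_at (l - k i) (b i))) (S n))
    as [L [HL0 HL]].
  { intros i l l' [Ha Hbi] Hll. split; [exact (dyadic_at_mono _ _ _ Ha Hll)|].
    intros Hi. apply (dyadic_at_mono _ _ _ (Hbi Hi)). lia. }
  { intros i Hi. destruct (dyadic_at_of_dyadic _ (Hady i ltac:(lia))) as [e1 He1].
    destruct (Nat.lt_ge_cases i n) as [Hin|Hin]; [|exists e1; split; [exact He1|lia]].
    assert (HaS : S1 (a (S i))).
    { split; [pose proof (Hinc 0%nat ltac:(lia)); pose proof (Hmon 1%nat (S i) ltac:(lia)); lra|].
      rewrite <- Han. apply Hmon. lia. }
    destruct (dyadic_at_of_dyadic _ (Hdy _ HaS (Hady (S i) ltac:(lia)))) as [e2 He2].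
    destruct (dyadic_at_of_dyadic _ (Hady (S i) ltac:(lia))) as [e3 He3].
    exists (Z.max e1 (Z.max e2 (e3 - k i) + k i))%Z.
    split; [apply (dyadic_at_mono _ _ _ He1); lia|].
    intros _. rewrite (Hb i Hin). apply dyadic_at_sub.
    - apply (dyadic_at_mono _ _ _ He2). lia.
    - apply (dyadic_at_mono _ _ _ (dyadic_at_scale _ (k i) _ He3)). lia. }
  exists L. split; [exact HL0|]. intros c Hl Hc.
  destruct (partition_piece a n _ Ha0 Han (Hc _ (in_dint_top c))) as [i [Hi Htop]].
  destruct (HL i ltac:(lia)) as [Ha Hbi].
  destruct (maps_affinely_of_affine g c (k i) (b i)) as [c' Hcc'].
  { apply (dyadic_at_mono _ _ _ (Hbi Hi)). lia. }
  { intros x Hx. apply Haff; [exact Hi|].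
    apply (dint_within c); [apply (dyadic_at_mono _ _ _ Ha Hl)|exact Htop|exact Hx]. }
  exists c'. split; [exact Hcc'|]. intros y Hy.
  destruct (maps_affinely_onto _ _ _ _ Hcc' Hy) as [x [Hx <-]]. apply HgS1, Hc, Hx.
Qed.

Lemma iter_S1 f t x : (forall x, S1 x -> S1 (f x)) -> S1 x -> S1 (Nat.iter t f x).
Proof. intros Hf Hx. induction t as [|t IH]; simpl; auto. Qed.

Lemma iter_comm {A} (f : A -> A) a b x :
  Nat.iter a f (Nat.iter b f x) = Nat.iter b f (Nat.iter a f x).
Proof. rewrite <- !Nat.iter_add. f_equal. lia. Qed.

Lemma iter_left_inv f h t x :
  (forall x, S1 x -> S1 (f x)) -> (forall x, S1 x -> h (f x) = x) ->
  S1 x -> Nat.iter t h (Nat.iter t f x) = x.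
Proof.
  intros Hf Hhf. revert x. induction t as [|t IH]; intros x Hx; [reflexivity|].
  change (Nat.iter (S t) h (f (Nat.iter t f x)) = x).
  replace (S t) with (t + 1)%nat by lia. rewrite Nat.iter_add. simpl.
  rewrite Hhf by (apply iter_S1; auto). apply IH, Hx.
Qed.

Lemma iter_period_mul {A} (f : A -> A) P x m :
  Nat.iter P f x = x -> Nat.iter (m * P) f x = x.
Proof.
  intros H. induction m as [|m IH]; [reflexivity|].
  simpl. rewrite Nat.iter_add, IH, H. reflexivity.
Qed.

Lemma periodic_of_maps_affinely f h t c c' :
  (forall x, S1 x -> S1 (f x)) -> (forall x, S1 x -> h (f x) = x) ->
  maps_affinely (Nat.iter t f) c c' -> on_circle c -> periodic_on f c' -> periodic_on f c.
Proof.
  intros Hf Hhf Hcc' Hc [P [HP Hper]]. exists P. split; [exact HP|]. intros x Hx.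
  rewrite <- (iter_left_inv f h t (Nat.iter P f x)) by (auto; apply iter_S1; auto).
  rewrite iter_comm, (Hper _ (maps_affinely_into _ _ _ _ Hcc' Hx)).
  apply iter_left_inv; auto.
Qed.

Lemma periodic_of_inverse f h c :
  (forall x, S1 x -> S1 (h x)) -> (forall x, S1 x -> f (h x) = x) ->
  on_circle c -> periodic_on h c -> periodic_on f c.
Proof.
  intros Hh Hfh Hc [P [HP Hper]]. exists P. split; [exact HP|]. intros x Hx.
  rewrite <- (Hper x Hx) at 1. apply iter_left_inv; auto.
Qed.

Lemma returns_inverse f h c :
  (forall x, S1 x -> S1 (f x)) -> (forall x, S1 x -> h (f x) = x) ->
  on_circle c -> returns f c -> returns h c.
Proof.
  intros Hf Hhf Hc [i [x [Hi [Hx Hix]]]]. exists i, (Nat.iter i f x).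
  rewrite iter_left_inv; auto.
Qed.

Lemma common_period (Q : nat -> nat -> Prop) N :
  (forall i P m, Q i P -> Q i (m * P)%nat) ->
  (forall i, (i < N)%nat -> exists P, (1 <= P)%nat /\ Q i P) ->
  exists P, (1 <= P)%nat /\ forall i, (i < N)%nat -> Q i P.
Proof.
  intros Hm. induction N as [|N IH]; intros H.
  - exists 1%nat. split; [lia|]. intros; lia.
  - destruct IH as [P [HP HQ]]; [intros i Hi; apply H; lia|].
    destruct (H N ltac:(lia)) as [P' [HP' HQ']].
    exists (P * P')%nat. split; [nia|]. intros i Hi.
    destruct (Nat.eq_dec i N) as [->|Hne].
    + apply Hm, HQ'.
    + rewrite Nat.mul_comm. apply Hm, HQ. lia.
Qed.

Lemma periodic_of_subintervals f L K :
  (0 <= L)%Z -> (dlev K <= L)%Z -> on_circle K ->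
  (forall j, dint_incl (L, j) K -> periodic_on f (L, j)) -> periodic_on f K.
Proof.
  intros HL HK Hc Hsub.
  destruct (common_period
              (fun i P => dint_incl (L, Z.of_nat i) K ->
                          forall y, in_dint (L, Z.of_nat i) y -> Nat.iter P f y = y)
              (Z.to_nat (2 ^ L)))
    as [P [HP HQ]].
  { intros i P m H Hi y Hy. apply iter_period_mul, H; assumption. }
  { intros i _. destruct (classic (dint_incl (L, Z.of_nat i) K)) as [Hi|Hi].
    - destruct (Hsub _ Hi) as [P [HP HQ]]. exists P. auto.
    - exists 1%nat. split; [lia|]. intros; contradiction. }
  exists P. split; [exact HP|]. intros y Hy.
  destruct (dint_level_cover L y HL (Hc y Hy)) as [j [Hj Hjy]].
  replace j with (Z.of_nat (Z.to_nat j)) in Hjy by lia.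
  apply (HQ (Z.to_nat j)); [lia| |exact Hjy].
  apply (dint_nest K _ y Hy Hjy). exact HK.
Qed.

Lemma pigeonhole N (u : nat -> nat) :
  (forall t, (t <= N)%nat -> (u t < N)%nat) -> exists a b, (a < b)%nat /\ u a = u b.
Proof.
  intros Hu. apply NNPP. intros Hinj.
  assert (Hb : bInjective (S N) u).
  { intros x y Hx Hy E. destruct (Nat.lt_total x y) as [Hl|[Hl|Hl]]; [|exact Hl|];
      exfalso; apply Hinj; eauto. }
  apply bInjective_bSurjective in Hb; [|intros x Hx; specialize (Hu x ltac:(lia)); lia].
  destruct (Hb N ltac:(lia)) as [x [Hx E]]. specialize (Hu x ltac:(lia)). lia.
Qed.

Section NoWandering.

Variables g gi : R -> R.
Hypothesis g_S1 : forall x, S1 x -> S1 (g x).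
Hypothesis gi_S1 : forall x, S1 x -> S1 (gi x).
Hypothesis g_gi : forall x, S1 x -> g (gi x) = x.
Hypothesis gi_g : forall x, S1 x -> gi (g x) = x.

Variable L : Z.
Hypothesis L_nonneg : (0 <= L)%Z.
Variable step : dint -> dint.
Hypothesis step_spec : forall c, (L <= dlev c)%Z -> on_circle c ->
  maps_affinely g c (step c) /\ on_circle (step c).

Hypothesis g_returns : forall c, on_circle c -> returns g c.

Definition orbit (J : dint) (t : nat) : dint := Nat.iter t step J.

Lemma orbit_spec J t :
  on_circle J -> (forall s, (s < t)%nat -> (L <= dlev (orbit J s))%Z) ->
  (forall s, (s < t)%nat -> maps_affinely g (orbit J s) (orbit J (S s))) /\
  (forall s, (s <= t)%nat -> on_circle (orbit J s)).
Proof.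
  intros HJ. induction t as [|t IH]; intros Hl.
  - split; [intros; lia|]. intros s Hs. replace s with 0%nat by lia. exact HJ.
  - destruct IH as [IH1 IH2]; [intros s Hs; apply Hl; lia|].
    destruct (step_spec (orbit J t)) as [Hs1 Hs2]; [apply Hl; lia|apply IH2; lia|].
    split; intros s Hs.
    + destruct (Nat.eq_dec s t) as [->|Hne]; [exact Hs1|apply IH1; lia].
    + destruct (Nat.eq_dec s (S t)) as [->|Hne]; [exact Hs2|apply IH2; lia].
Qed.

Definition exit_time (J : dint) (tau : nat) : Prop :=
  (1 <= tau)%nat /\ (forall s, (s < tau)%nat -> (L <= dlev (orbit J s))%Z) /\
  (dlev (orbit J tau) < L)%Z.

Lemma exit_time_exists J :
  on_circle J -> (L <= dlev J)%Z -> ~ periodic_on g J -> exists tau, exit_time J tau.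
Proof.
  intros HJ HlJ Hnp.
  destruct (classic (exists t, (dlev (orbit J t) < L)%Z)) as [Hex|Hall].
  - destruct (least_nat _ Hex) as [tau [Htau Hmin]]. exists tau.
    split; [destruct tau; [simpl in Htau; lia|lia]|]. split; [|exact Htau].
    intros s Hs. specialize (Hmin s Hs). lia.
  - exfalso.
    assert (Hl : forall s, (L <= dlev (orbit J s))%Z).
    { intros s. apply Z.nlt_ge. intros H. apply Hall. eauto. }
    assert (Hstep : forall t, maps_affinely g (orbit J t) (orbit J (S t))).
    { intros t. apply (orbit_spec J (S t) HJ); [intros; apply Hl|lia]. }
    assert (Hcirc : forall t, on_circle (orbit J t)).
    { intros t. apply (orbit_spec J t HJ); [intros; apply Hl|lia]. }
    destruct (chain_dichotomy g (orbit J) Hstep Hcirc) as [[c [Hc Hw]]|[m Hm]].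
    + exact (Hw (g_returns c Hc)).
    + apply Hnp, (periodic_of_maps_affinely g gi m J (orbit J m)); auto.
      exact (chain_iter g (orbit J) Hstep 0 m).
Qed.

Lemma exit_time_maps J tau :
  on_circle J -> exit_time J tau ->
  maps_affinely (Nat.iter tau g) J (orbit J tau) /\ on_circle (orbit J tau).
Proof.
  intros HJ [_ [Hl _]]. destruct (orbit_spec J tau HJ Hl) as [H1 H2]. split.
  - exact (maps_affinely_iter g (orbit J) 0 tau (fun s Hs => H1 s ltac:(lia))).
  - apply H2. lia.
Qed.

Definition aperiodic (j : Z) : Prop := on_circle (L, j) /\ ~ periodic_on g (L, j).

(* The exit interval has level below [L] and is not periodic, so neither are all of its
   level-[L] subintervals. *)
Lemma aperiodic_successor j :
  aperiodic j ->
  exists j' tau, aperiodic j' /\ exit_time (L, j) tau /\ dint_incl (L, j') (orbit (L, j) tau).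
Proof.
  intros [Hc Hnp].
  destruct (exit_time_exists (L, j) Hc ltac:(unfold dlev; simpl; lia) Hnp) as [tau Htau].
  destruct (exit_time_maps _ _ Hc Htau) as [Hmap HK].
  assert (HKnp : ~ periodic_on g (orbit (L, j) tau)).
  { intros Hp. exact (Hnp (periodic_of_maps_affinely g gi _ _ _ g_S1 gi_g Hmap Hc Hp)). }
  apply NNPP. intros Hno. apply HKnp.
  apply (periodic_of_subintervals g L); [exact L_nonneg|destruct Htau as [_ [_ ?]]; lia|exact HK|].
  intros j' Hj'. apply NNPP. intros Hj'np. apply Hno. exists j', tau.
  split; [|split; [exact Htau|exact Hj']]. split; [|exact Hj'np].
  intros y Hy. exact (HK y (Hj' y Hy)).
Qed.

Definition aperiodic_cycle (C : Z -> Prop) : Prop :=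
  forall j, C j -> aperiodic j /\
    exists j'' tau, C j'' /\ exit_time (L, j'') tau /\ dint_incl (L, j) (orbit (L, j'') tau).

Lemma aperiodic_cycle_exists :
  (exists j, aperiodic j) -> exists C, (exists j, C j) /\ aperiodic_cycle C.
Proof.
  intros [j0 Hj0].
  destruct (functional_choice (fun j j' => aperiodic j -> exists tau,
              aperiodic j' /\ exit_time (L, j) tau /\ dint_incl (L, j') (orbit (L, j) tau)))
    as [hs Hhs].
  { intros j. destruct (classic (aperiodic j)) as [Hb|Hb].
    - destruct (aperiodic_successor j Hb) as [j' [tau H]]. exists j'. intros _. exists tau. exact H.
    - exists j. intros; contradiction. }
  assert (Hiter : forall t j, aperiodic j -> aperiodic (Nat.iter t hs j)).
  { induction t as [|t IH]; intros j Hj; [exact Hj|].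
    destruct (Hhs _ (IH j Hj)) as [tau [H _]]. exact H. }
  destruct (pigeonhole (Z.to_nat (2 ^ L)) (fun t => Z.to_nat (Nat.iter t hs j0)))
    as [a [b [Hab Eab]]].
  { intros t _. destruct (on_circle_bounds _ (proj1 (Hiter t j0 Hj0))) as [_ Hj].
    unfold dlev, didx in Hj; simpl in Hj. lia. }
  assert (Eab' : Nat.iter a hs j0 = Nat.iter b hs j0).
  { destruct (on_circle_bounds _ (proj1 (Hiter a j0 Hj0))) as [_ Ha].
    destruct (on_circle_bounds _ (proj1 (Hiter b j0 Hj0))) as [_ Hb].
    unfold dlev, didx in Ha, Hb; simpl in Ha, Hb. lia. }
  exists (fun j => aperiodic j /\ exists m, (1 <= m)%nat /\ Nat.iter m hs j = j). split.
  - exists (Nat.iter a hs j0). split; [apply Hiter, Hj0|]. exists (b - a)%nat. split; [lia|].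
    rewrite <- Nat.iter_add. replace (b - a + a)%nat with b by lia. symmetry. exact Eab'.
  - intros j [Hb [m [Hm Hper]]]. split; [exact Hb|].
    set (j'' := Nat.iter (m - 1) hs j).
    assert (Hj'' : hs j'' = j).
    { unfold j''. change (Nat.iter (S (m - 1)) hs j = j). replace (S (m - 1)) with m by lia.
      exact Hper. }
    assert (Hb'' : aperiodic j'') by (apply Hiter, Hb).
    destruct (Hhs j'' Hb'') as [tau [_ [Htau Hincl]]]. rewrite Hj'' in Hincl.
    exists j'', tau. split; [|split; [exact Htau|exact Hincl]]. split; [exact Hb''|].
    exists m. split; [exact Hm|]. unfold j''. rewrite iter_comm, Hper. reflexivity.
Qed.

Definition cycle_orbit (C : Z -> Prop) (c : dint) : Prop :=
  exists j tau s, C j /\ exit_time (L, j) tau /\ (1 <= s <= tau)%nat /\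
    dint_incl c (orbit (L, j) s).

Section Cycle.

Variable C : Z -> Prop.
Hypothesis C_cycle : aperiodic_cycle C.

Lemma cycle_orbit_start j : C j -> cycle_orbit C (L, j).
Proof.
  intros Hj. destruct (proj2 (C_cycle j Hj)) as [j'' [tau [Hj'' [Htau Hincl]]]].
  exists j'', tau, tau. split; [exact Hj''|]. split; [exact Htau|].
  split; [destruct Htau as [? _]; lia|exact Hincl].
Qed.

Lemma cycle_orbit_circle c : cycle_orbit C c -> on_circle c.
Proof.
  intros [j [tau [s [Hj [[_ [Hl _]] [Hs Hincl]]]]]] y Hy.
  destruct (orbit_spec (L, j) tau (proj1 (proj1 (C_cycle j Hj))) Hl) as [_ H2].
  apply (H2 s ltac:(lia)), Hincl, Hy.
Qed.

(* Going backwards along the orbits never leaves the levels where [g] is affine, so [gi]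
   maps every interval of the cycle orbits affinely into another one. *)
Lemma cycle_orbit_pred c : cycle_orbit C c -> exists c', maps_affinely gi c c' /\ cycle_orbit C c'.
Proof.
  intros [j [tau [s [Hj [Htau [Hs Hincl]]]]]].
  destruct Htau as [Htau1 [Hl Hexit]].
  destruct (orbit_spec (L, j) tau (proj1 (proj1 (C_cycle j Hj))) Hl) as [H1 H2].
  assert (Hg : maps_affinely g (orbit (L, j) (s - 1)) (orbit (L, j) s)).
  { replace s with (S (s - 1)) at 2 by lia. apply H1. lia. }
  assert (Hgi : maps_affinely gi (orbit (L, j) s) (orbit (L, j) (s - 1))).
  { apply (maps_affinely_inv g gi _ _ Hg). intros x Hx.
    apply gi_g, (H2 (s - 1)%nat ltac:(lia)), Hx. }
  destruct (maps_affinely_restrict _ _ _ _ Hgi Hincl) as [c' [Hc' Hc'incl]].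
  exists c'. split; [exact Hc'|].
  destruct (Nat.eq_dec s 1) as [->|Hs1].
  - destruct (proj2 (C_cycle j Hj)) as [j'' [tau'' [Hj'' [Htau'' Hincl'']]]].
    exists j'', tau'', tau''. split; [exact Hj''|]. split; [exact Htau''|].
    split; [destruct Htau'' as [? _]; lia|].
    exact (dint_incl_trans _ _ _ Hc'incl Hincl'').
  - exists j, tau, (s - 1)%nat. split; [exact Hj|]. split; [repeat split; assumption|].
    split; [lia|exact Hc'incl].
Qed.

Lemma aperiodic_cycle_empty : ~ exists j, C j.
Proof.
  intros [ja Hja].
  destruct (functional_choice (fun c c' =>
              cycle_orbit C c -> maps_affinely gi c c' /\ cycle_orbit C c'))
    as [back Hback].
  { intros c. destruct (classic (cycle_orbit C c)) as [Hc|Hc].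
    - destruct (cycle_orbit_pred c Hc) as [c' Hc']. exists c'. auto.
    - exists c. intros; contradiction. }
  set (B := fun t => Nat.iter t back (L, ja)).
  assert (HB : forall t, cycle_orbit C (B t)).
  { induction t as [|t IH]; [exact (cycle_orbit_start ja Hja)|]. exact (proj2 (Hback _ IH)). }
  assert (Hstep : forall t, maps_affinely gi (B t) (B (S t))) by (intros t; apply (Hback _ (HB t))).
  assert (Hcirc : forall t, on_circle (B t)) by (intros t; apply cycle_orbit_circle, HB).
  destruct (chain_dichotomy gi B Hstep Hcirc) as [[c [Hc Hw]]|[m Hm]].
  - exact (Hw (returns_inverse g gi c g_S1 gi_g Hc (g_returns c Hc))).
  - apply (proj2 (proj1 (C_cycle ja Hja))), (periodic_of_inverse g gi); auto;
      [exact (Hcirc 0%nat)|].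
    apply (periodic_of_maps_affinely gi g m (B 0%nat) (B m)); auto.
    exact (chain_iter gi B Hstep 0 m).
Qed.

End Cycle.

Lemma circle_periodic : periodic_on g circle.
Proof.
  apply NNPP. intros Hnp.
  assert (Hbad : exists j, aperiodic j).
  { apply NNPP. intros Hno. apply Hnp.
    apply (periodic_of_subintervals g L); [exact L_nonneg|unfold circle, dlev; simpl; lia| |].
    - intros x Hx. apply in_dint_circle, Hx.
    - intros j Hj. apply NNPP. intros Hjnp. apply Hno. exists j. split; [|exact Hjnp].
      intros x Hx. apply in_dint_circle, Hj, Hx. }
  destruct (aperiodic_cycle_exists Hbad) as [C [HC Hcyc]].
  exact (aperiodic_cycle_empty C Hcyc HC).
Qed.

End NoWandering.

Lemma S1_open_interval al be : 0 <= al -> be <= 1 -> S1_open (fun y => al < y < be).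
Proof.
  intros Ha Hb. split; [intros x Hx; unfold S1; lra|].
  intros x Hx. exists (Rmin (x - al) (be - x)). split.
  - unfold Rmin; destruct (Rle_dec (x - al) (be - x)); lra.
  - intros y Hy Hd. unfold cdist, S1, Rmin in *.
    destruct (Rle_dec (x - al) (be - x)); destruct (Rle_dec (Rabs (x - y)) (1 - Rabs (x - y)));
      unfold Rabs in *; destruct (Rcase_abs (x - y)); lra.
Qed.

Lemma wandering_interval g al be :
  (forall i y, (1 <= i)%nat -> al < y < be -> al < Nat.iter i g y < be -> False) ->
  wandering g (fun y => al < y < be).
Proof.
  intros Hw [|p|p] Hn x [Hx1 Hx2]; simpl in Hn, Hx1.
  - exact Hn.
  - destruct Hx1 as [x0 [_ [Hx0 E]]].
    apply (Hw (Pos.to_nat p) x0); [lia|exact Hx0|rewrite E; exact Hx2].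
  - destruct Hx1 as [_ Hx1]. exact (Hw (Pos.to_nat p) x ltac:(lia) Hx2 Hx1).
Qed.

Lemma wandering_of_dint g c :
  on_circle c -> ~ returns g c ->
  exists U, S1_open U /\ (exists x, U x) /\ wandering g U.
Proof.
  intros Hc Hw. pose proof (pow2_pos (dlev c)).
  set (al := IZR (didx c) / pow2 (dlev c)).
  assert (Hin : forall y, al < y < dint_top c -> in_dint c y).
  { intros y [H1 H2]. unfold in_dint, al, dint_top in *.
    apply (Rmult_lt_compat_r (pow2 (dlev c))) in H1, H2; [|assumption..].
    replace (IZR (didx c) / pow2 (dlev c) * pow2 (dlev c)) with (IZR (didx c)) in H1
      by (field; lra).
    replace ((IZR (didx c) + 1) / pow2 (dlev c) * pow2 (dlev c)) with (IZR (didx c) + 1) in H2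
      by (field; lra).
    lra. }
  assert (Hlt : al < dint_top c).
  { unfold al, dint_top, Rdiv. apply Rmult_lt_compat_r; [apply Rinv_0_lt_compat|]; lra. }
  exists (fun y => al < y < dint_top c). split; [|split].
  - apply S1_open_interval.
    + destruct (on_circle_bounds c Hc) as [_ [Hj _]]. unfold al. apply IZR_le in Hj.
      apply Rmult_le_pos; [lra|]. apply Rlt_le, Rinv_0_lt_compat. assumption.
    + apply (Hc _ (in_dint_top c)).
  - exists ((al + dint_top c) / 2). lra.
  - apply wandering_interval. intros i y Hi Hy Hiy. apply Hw. exists i, y. auto.
Qed.

Lemma in_V_inverse g :
  in_V g -> exists gi, (forall x, S1 x -> S1 (gi x)) /\
    (forall x, S1 x -> g (gi x) = x) /\ (forall x, S1 x -> gi (g x) = x).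
Proof.
  intros [HgS1 [Hinj [Hsurj _]]].
  destruct (functional_choice (fun y x => S1 y -> S1 x /\ g x = y)) as [gi Hgi].
  { intros y. destruct (classic (S1 y)) as [Hy|Hy].
    - destruct (Hsurj y Hy) as [x Hx]. exists x. auto.
    - exists y. intros; contradiction. }
  exists gi. split; [|split].
  - intros x Hx. apply (Hgi x Hx).
  - intros x Hx. apply (Hgi x Hx).
  - intros x Hx. apply Hinj; [apply (Hgi _ (HgS1 x Hx))|exact Hx|apply (Hgi _ (HgS1 x Hx))].
Qed.

Lemma in_V_affine_step g :
  in_V g -> exists L step, (0 <= L)%Z /\
    forall c, (L <= dlev c)%Z -> on_circle c -> maps_affinely g c (step c) /\ on_circle (step c).
Proof.
  intros HV. destruct (in_V_maps_affinely g HV) as [L [HL Hex]].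
  destruct (functional_choice (fun c c' => (L <= dlev c)%Z -> on_circle c ->
              maps_affinely g c c' /\ on_circle c')) as [step Hstep].
  { intros c. destruct (classic ((L <= dlev c)%Z /\ on_circle c)) as [[H1 H2]|H].
    - destruct (Hex c H1 H2) as [c' Hc']. exists c'. auto.
    - exists c. intros H1 H2. exfalso. auto. }
  exists L, step. auto.
Qed.

Theorem lemma4p2 (g : R -> R) :
  in_V g -> infinite_order g ->
  exists U : R -> Prop, S1_open U /\ (exists x, U x) /\ wandering g U.
Proof.
  intros HV Hinf.
  destruct (in_V_affine_step g HV) as [L [step [HL Hstep]]].
  destruct (in_V_inverse g HV) as [gi [HgiS1 [Hggi Hgig]]].
  apply NNPP. intros Hno.
  assert (Hret : forall c, on_circle c -> returns g c).
  { intros c Hc. apply NNPP. intros Hw. exact (Hno (wandering_of_dint g c Hc Hw)). }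
  destruct (circle_periodic g gi (proj1 HV) HgiS1 Hggi Hgig L HL step Hstep Hret) as [P [HP Hper]].
  destruct (Hinf P HP) as [x [Hx Hne]].
  exact (Hne (Hper x (proj2 (in_dint_circle x) Hx))).
Qed.
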